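(* Assume [H-3] and let $T_0$ and $\bar R^i$ be as in the resolvent structure lemma. For $0\le t<s\le t+T_0$ and $v\in[0,1]$, set $u(v)=s-v(s-t)$ and $\bar R_v=\mathbb M_{s-t}^{-1}R^{\cdot,1}_{s,u(v)}$, i.e. the $nd\times d$ matrix with blocks $\frac{v^{k-1}}{(k-1)!}\bar R^k_{s,u(v)}$, $k=1,\dots,n$. There exists $C>0$ (depending on [H-3], $T_0$) such that for all $s\in[t,t+T_0]$ and all $p\in\mathbb R^{nd}$, $$\int_0^1|\bar R_v^*\mathbb M_{s-t}p|^\alpha\,dv\ge C|\mathbb M_{s-t}p|^\alpha.$$
   Context: $d,n\ge1$, $\alpha\in(0,2)$. $A_t$ has $d\times d$ blocks $a^{i,j}_t$ with $a^{i,j}_t=0$ if $j<i-1$, measurable and bounded in time; [H-3]: $\underline\alpha|\xi|^2\le\langle a^{i,i-1}_t\xi,\xi\rangle\le\overline\alpha|\xi|^2$ for $\xi\in\mathbb R^d$, $i\in\{2,\dots,n\}$, and $\|a^{i,j}_t\|\le\overline\alpha$. Resolvent $\frac{d}{ds}R_{s,t}=A_sR_{s,t}$, $R_{t,t}=I$; $R^{\cdot,1}_{s,t}$ its first $d$ columns. Resolvent structure lemma: there is $T_0\in(0,1]$ such that for $0\le t\le s\le t+T_0$, $R^{\cdot,1}_{s,t}$ has blocks $\frac{(s-t)^{i-1}}{(i-1)!}\bar R^i_{s,t}$ with $\bar R^i_{s,t}\in\mathbb R^d\otimes\mathbb R^d$ continuous, non-degenerate and bounded uniformly. $\mathbb M_u=\mathrm{Diag}(I_d,uI_d,\dots,u^{n-1}I_d)$.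 *)

From HB Require Import structures.
From mathcomp Require Import all_boot all_order all_algebra.
From mathcomp Require Import all_classical all_reals all_analysis.
Set Implicit Arguments. Unset Strict Implicit. Unset Printing Implicit Defensive.
Import Order.TTheory GRing.Theory Num.Theory.
Import numFieldNormedType.Exports.
Local Open Scope classical_set_scope.
Local Open Scope ring_scope.

(* Conventions: the paper's n (number of blocks, n >= 1) is encoded as n.+1,
   so the state space R^{nd} is 'cV_(n.+1 * d).  Blocks are indexed 0-based:
   paper block i (1-based) is our block i-1.  The (a,b) entry of block (i,j)
   of a matrix of size n.+1*d is the entry (i*d+a, j*d+b) = (mxvec_index i a,
   mxvec_index j b). *)

Section Defs.
Variable R : realType.

Definition vnorm (m : nat) (p : 'cV[R]_m) : R := Num.sqrt (\sum_k (p k 0) ^+ 2).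

Definition blk (n d : nat) (A : 'M[R]_(n.+1 * d)) (i j : 'I_n.+1) : 'M[R]_d :=
  \matrix_(a, b) A (mxvec_index i a) (mxvec_index j b).

Definition cblk (n d : nat) (B : 'M[R]_(n.+1 * d, d)) (i : 'I_n.+1) : 'M[R]_d :=
  \matrix_(a, b) B (mxvec_index i a) b.

Lemma d_le_Snd (n d : nat) : (d <= n.+1 * d)%N.
Proof. by rewrite mulSn leq_addr. Qed.

Definition firstcols (n d : nat) (M : 'M[R]_(n.+1 * d)) : 'M[R]_(n.+1 * d, d) :=
  \matrix_(k, b) M k (widen_ord (d_le_Snd n d) b).

(* M_u = Diag(I_d, u I_d, ..., u^{n-1} I_d): entry k of the diagonal lies in
   block k %/ d (0-based), hence carries u ^+ (k %/ d). *)
Definition Mmat (n d : nat) (u : R) : 'M[R]_(n.+1 * d) :=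
  \matrix_(k, l) ((k == l)%:R * u ^+ (k %/ d)%N).

Definition Rbarv (n d : nat) (Res : R -> R -> 'M[R]_(n.+1 * d)) (t s v : R)
  : 'M[R]_(n.+1 * d, d) :=
  invmx (Mmat n d (s - t)) *m firstcols (Res s (s - v * (s - t))).

End Defs.

From HB Require Import structures.
From mathcomp Require Import all_boot all_order all_algebra.
From mathcomp Require Import all_classical all_reals all_analysis.
From mathcomp Require Import lra ring.
Import Order.TTheory GRing.Theory Num.Theory.
Import numFieldNormedType.Exports.
Set Implicit Arguments. Unset Strict Implicit. Unset Printing Implicit Defensive.
Local Open Scope classical_set_scope.
Local Open Scope ring_scope.

(* Undoing the scaling, [<Rbar_v^T M_{s-t} p, z>] equals
   [sum_i v^i/i! <q_i, Rb^i z>], where [q_i] are the blocks of [q = M_{s-t} p].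
   The two-sided bounds on [Rb^i] then give [|Rbar_v^T q| <= K sum_i |q_i|] and, for
   every block [j], [|Rbar_v^T q| >= c v^j/j! |q_j| - K sum_{i<>j} v^i/i! |q_i|].
   By induction on the number of blocks, some block [j] makes this lower bound at least
   [eps sum_i |q_i| >= eps |q|] on a subinterval of [0,1] of length [delta], with [eps]
   and [delta] independent of [q]: either the lowest block dominates the others and wins
   for small [v], or it is negligible and, after factoring out one [v], the remaining
   blocks win by induction on an interval away from [0].  Integrating the [alpha]-th
   power over that subinterval gives the bound with [C = delta eps^alpha]. *)

Section EuclideanNorm.
Variable R : realType.

Definition dot (m : nat) (x y : 'cV[R]_m) : R := \sum_k x k 0 * y k 0.

Lemma dotC m (x y : 'cV[R]_m) : dot x y = dot y x.
Proof. by apply: eq_bigr => k _; rewrite mulrC. Qed.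

Lemma dotZr m (a : R) (x y : 'cV[R]_m) : dot x (a *: y) = a * dot x y.
Proof. by rewrite /dot mulr_sumr; apply: eq_bigr => k _; rewrite mxE mulrCA. Qed.

Lemma dotZl m (a : R) (x y : 'cV[R]_m) : dot (a *: x) y = a * dot x y.
Proof. by rewrite dotC dotZr dotC. Qed.

Lemma dot_trmx_mul m l (A : 'M[R]_(m, l)) (x : 'cV[R]_m) (y : 'cV[R]_l) :
  dot (A^T *m x) y = dot x (A *m y).
Proof.
have dotE u v : dot u v = ((u : 'cV[R]__)^T *m v) 0 0.
  by rewrite mxE; apply: eq_bigr => k _; rewrite mxE.
by rewrite !dotE trmx_mul trmxK mulmxA.
Qed.

Lemma vnorm_ge0 m (x : 'cV[R]_m) : 0 <= vnorm x.
Proof. exact: sqrtr_ge0. Qed.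

Lemma sqr_vnorm m (x : 'cV[R]_m) : vnorm x ^+ 2 = dot x x.
Proof.
rewrite sqr_sqrtr; last by apply: sumr_ge0 => k _; exact: sqr_ge0.
by apply: eq_bigr => k _; rewrite expr2.
Qed.

Lemma vnorm_eq0 m (x : 'cV[R]_m) : (vnorm x == 0) = (x == 0).
Proof.
have S0 : 0 <= \sum_k x k 0 ^+ 2 by apply: sumr_ge0 => k _; exact: sqr_ge0.
rewrite /vnorm sqrtr_eq0 le_eqVlt ltNge S0 orbF psumr_eq0 => [|k _]; last first.
  exact: sqr_ge0.
apply/allP/eqP => [x0|-> k _]; last by rewrite mxE sqrf_eq0 eqxx.
apply/matrixP => k l; rewrite ord1 mxE.
by have /implyP/(_ isT) := x0 k (mem_index_enum _); rewrite sqrf_eq0 => /eqP.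
Qed.

Lemma vnorm0 m : vnorm (0 : 'cV[R]_m) = 0.
Proof. by apply/eqP; rewrite vnorm_eq0. Qed.

Lemma vnormN m (x : 'cV[R]_m) : vnorm (- x) = vnorm x.
Proof. by congr Num.sqrt; apply: eq_bigr => k _; rewrite mxE sqrrN. Qed.

Lemma dot_le_vnorm m (x y : 'cV[R]_m) : dot x y <= vnorm x * vnorm y.
Proof.
have [->|x0] := eqVneq x 0.
  by rewrite vnorm0 mul0r /dot big1 // => k _; rewrite mxE mul0r.
have [->|y0] := eqVneq y 0.
  by rewrite vnorm0 mulr0 /dot big1 // => k _; rewrite mxE mulr0.
have a_gt0 : 0 < vnorm x by rewrite lt0r vnorm_eq0 x0 vnorm_ge0.
have b_gt0 : 0 < vnorm y by rewrite lt0r vnorm_eq0 y0 vnorm_ge0.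
set a := vnorm x in a_gt0 *; set b := vnorm y in b_gt0 *.
have : 0 <= \sum_k (b * x k 0 - a * y k 0) ^+ 2 by apply: sumr_ge0 => k _; exact: sqr_ge0.
have -> : \sum_k (b * x k 0 - a * y k 0) ^+ 2 =
    b ^+ 2 * dot x x - 2 * (a * b) * dot x y + a ^+ 2 * dot y y.
  by rewrite /dot !mulr_sumr -!sumrB -big_split /=; apply: eq_bigr => k _; ring.
rewrite -!sqr_vnorm -/a -/b => expand_ge0.
have ab_gt0 : 0 < a * b by rewrite mulr_gt0.
by rewrite -(ler_pM2l ab_gt0); nra.
Qed.

Lemma dot_ge_Nvnorm m (x y : 'cV[R]_m) : - (vnorm x * vnorm y) <= dot x y.
Proof.
have dotNr : dot x (- y) = - dot x y.
  by rewrite /dot -sumrN; apply: eq_bigr => k _; rewrite mxE mulrN.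
by rewrite lerNl -dotNr -(vnormN y) dot_le_vnorm.
Qed.

Lemma sqrt_sum_le (I : finType) (F : I -> R) : (forall i, 0 <= F i) ->
  Num.sqrt (\sum_i F i) <= \sum_i Num.sqrt (F i).
Proof.
move=> F0; pose P (x y : R) := 0 <= x /\ Num.sqrt x <= y.
suff [] : P (\sum_i F i) (\sum_i Num.sqrt (F i)) by [].
apply: (big_rec2 P); first by split; rewrite ?sqrtr0.
move=> i x y _ [x0 le_xy]; split; first by rewrite addr_ge0.
apply: (@le_trans _ _ (Num.sqrt (F i) + Num.sqrt x)); last by rewrite lerD2l.
rewrite -(@ler_pXn2r _ 2) ?nnegrE ?addr_ge0 ?sqrtr_ge0 //.
rewrite sqr_sqrtr ?addr_ge0 // sqrrD !sqr_sqrtr // -addrA lerD2l lerDr.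
by rewrite mulrn_wge0 // mulr_ge0 ?sqrtr_ge0.
Qed.

Lemma unitmx_vnorm_lbound d (B : 'M[R]_d) (c : R) : 0 < c ->
  (forall z : 'cV_d, c * vnorm z <= vnorm (B *m z)) -> B \in unitmx.
Proof.
move=> c_gt0 lbB; rewrite unitmxE unitfE -det_tr; apply/negP => /det0P [v v0 vB].
have : vnorm v^T <= 0.
  rewrite -(ler_pM2l c_gt0) mulr0; apply: le_trans (lbB _) _.
  by rewrite -[B]trmxK -trmx_mul vB trmx0 vnorm0.
rewrite le_eqVlt ltNge vnorm_ge0 orbF vnorm_eq0 -trmx0 (inj_eq (@trmx_inj _ _ _)).
by rewrite (negbTE v0).
Qed.

End EuclideanNorm.

Lemma nth_allpairs_pair (T1 T2 : Type) (x1 : T1) (x2 : T2) (s : seq T1) (t : seq T2) i j :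
  (i < size s)%N -> (j < size t)%N ->
  nth (x1, x2) [seq (a, b) | a <- s, b <- t] (i * size t + j) = (nth x1 s i, nth x2 t j).
Proof.
elim: s i => [|a s IHs] [|i] //= lt_i lt_j.
  by rewrite nth_cat size_map lt_j (nth_map x2).
rewrite nth_cat size_map mulSn -addnA ltnNge leq_addr /= addKn.
exact: IHs.
Qed.

Lemma mxvec_indexE (m n : nat) (i : 'I_m) (j : 'I_n) :
  mxvec_index i j = (i * n + j)%N :> nat.
Proof.
have enumE : enum {: 'I_m * 'I_n} = [seq (x1, x2) | x1 <- enum 'I_m, x2 <- enum 'I_n].
  by rewrite enumT unlock.
have lt_ij : (i * n + j < m * n)%N.
  apply: (@leq_trans (i * n + n)); first by rewrite ltn_add2l.
  by rewrite addnC -mulSn leq_mul2r ltn_ord orbT.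
have nth_ij : nth (i, j) (enum {: 'I_m * 'I_n}) (i * n + j) = (i, j).
  have := @nth_allpairs_pair _ _ i j (enum 'I_m) (enum 'I_n) i j.
  by rewrite enumE !size_enum_ord !nth_ord_enum => ->.
apply/eqP; rewrite -(nth_uniq (i, j) _ _ (enum_uniq {: 'I_m * 'I_n})).
- by rewrite /mxvec_index /= nth_enum_rank nth_ij.
all: by rewrite -cardE mxvec_cast.
Qed.

Lemma mxvec_index_divn (m d : nat) (i : 'I_m) (a : 'I_d) :
  ((mxvec_index i a : nat) %/ d)%N = i.
Proof.
rewrite mxvec_indexE divnMDl; last by case: d a => [[]|].
by rewrite divn_small ?addn0.
Qed.

Section Blocks.
Variables (R : realType) (n d : nat).
Local Notation N := (n.+1 * d)%N.

Definition vblk (p : 'cV[R]_N) (i : 'I_n.+1) : 'cV[R]_d :=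
  \col_a p (mxvec_index i a) 0.

Lemma sum_mxvec_index (F : 'I_N -> R) :
  \sum_k F k = \sum_(i < n.+1) \sum_(a < d) F (mxvec_index i a).
Proof.
rewrite (reindex _ (curry_mxvec_bij _ _)) /= pair_bigA /=.
by apply: eq_bigr => -[i a].
Qed.

Lemma vnorm_le_sum_vblk (p : 'cV[R]_N) : vnorm p <= \sum_i vnorm (vblk p i).
Proof.
rewrite /vnorm sum_mxvec_index; apply: le_trans (sqrt_sum_le _) _.
  by move=> i; apply: sumr_ge0 => a _; exact: sqr_ge0.
by apply: ler_sum => i _; under [X in _ <= Num.sqrt X]eq_bigr do rewrite mxE.
Qed.

Lemma dot_trmx_vblk (G : 'M[R]_(N, d)) (p : 'cV[R]_N) (z : 'cV[R]_d) :
  dot (G^T *m p) z = \sum_i dot (vblk p i) (cblk G i *m z).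
Proof.
rewrite dot_trmx_mul /dot sum_mxvec_index; apply: eq_bigr => i _.
apply: eq_bigr => a _; rewrite !mxE; congr (_ * _).
by apply: eq_bigr => b _; rewrite mxE.
Qed.

Lemma Mmat_unitmx (h : R) : h != 0 -> Mmat n d h \in unitmx.
Proof.
move=> h0; suff /mulmx1_unit[] : Mmat n d h *m Mmat n d h^-1 = 1%:M by [].
apply/matrixP => k l; rewrite !mxE (bigD1 k) //= big1 => [|j /negbTE kj]; last first.
  by rewrite !mxE eq_sym kj !mul0r.
rewrite !mxE eqxx mul1r addr0; case: eqVneq => [->|] /=; last by rewrite !mul0r mulr0.
by rewrite !mul1r -exprMn mulfV // expr1n.
Qed.

Lemma trmx_Mmat (h : R) : (Mmat n d h)^T = Mmat n d h.
Proof.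
by apply/matrixP => k l; rewrite !mxE eq_sym; case: eqVneq => [->|]; rewrite ?mul0r.
Qed.

Lemma vblk_Mmat (h : R) (p : 'cV[R]_N) i : vblk (Mmat n d h *m p) i = h ^+ i *: vblk p i.
Proof.
apply/colP => a; rewrite !mxE (bigD1 (mxvec_index i a)) //= big1 ?addr0.
  by rewrite !mxE eqxx mul1r mxvec_index_divn.
by move=> k /negbTE; rewrite !mxE eq_sym => ->; rewrite !mul0r.
Qed.

Lemma trmx_Rbarv_Mmat (Res : R -> R -> 'M[R]_N) t s v (p : 'cV[R]_N) : s != t ->
  (Rbarv Res t s v)^T *m (Mmat n d (s - t) *m p) =
  (firstcols (Res s (s - v * (s - t))))^T *m p.
Proof.
move=> st; rewrite /Rbarv trmx_mul -mulmxA (mulmxA _ (Mmat n d _)).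
rewrite trmx_inv trmx_Mmat mulVmx ?mul1mx //.
by rewrite Mmat_unitmx // subr_eq0.
Qed.

End Blocks.

Section AdjointSum.
Variables (R : realType) (d N : nat) (w : 'cV[R]_d) (Q : 'I_N -> 'cV[R]_d)
  (B : 'I_N -> 'M[R]_d) (coef : 'I_N -> R) (c K : R).
Hypotheses (coef_ge0 : forall i, 0 <= coef i) (K_ge0 : 0 <= K)
  (B_ub : forall i z, vnorm (B i *m z) <= K * vnorm z)
  (dot_w : forall z, dot w z = \sum_i coef i * dot (Q i) (B i *m z)).
(* [dot_w] characterises [w] as [\sum_i coef i *: ((B i)^T *m Q i)]. *)

Lemma vnorm_adjoint_sum_le : vnorm w <= K * \sum_i coef i * vnorm (Q i).
Proof.
have rhs_ge0 : 0 <= K * \sum_i coef i * vnorm (Q i).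
  by rewrite mulr_ge0 // sumr_ge0 // => i _; rewrite mulr_ge0 ?vnorm_ge0.
have [w0|w_neq0] := eqVneq (vnorm w) 0; first by rewrite w0.
have w_gt0 : 0 < vnorm w by rewrite lt0r w_neq0 vnorm_ge0.
rewrite -(ler_pM2l w_gt0) -expr2 sqr_vnorm dot_w !mulr_sumr.
apply: ler_sum => i _.
apply: (@le_trans _ _ (coef i * (vnorm (Q i) * (K * vnorm w)))); last by lra.
apply: ler_wpM2l => //; apply: le_trans (dot_le_vnorm _ _) _.
exact/ler_wpM2l/B_ub/vnorm_ge0.
Qed.

Hypotheses (c_gt0 : 0 < c) (B_lb : forall i z, c * vnorm z <= vnorm (B i *m z)).

Lemma vnorm_adjoint_sum_ge (j : 'I_N) :
  coef j * c * vnorm (Q j) - K * \sum_(i | i != j) coef i * vnorm (Q i) <= vnorm w.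
Proof.
set S := \sum_(i | i != j) _.
have S_ge0 : 0 <= S by rewrite sumr_ge0 // => i _; rewrite mulr_ge0 ?vnorm_ge0.
have [Qj0|Qj_neq0] := eqVneq (Q j) 0.
  by rewrite Qj0 vnorm0 mulr0 sub0r (le_trans _ (vnorm_ge0 w)) // oppr_le0 mulr_ge0.
have [z Bz] : exists z, B j *m z = Q j.
  by exists (invmx (B j) *m Q j); rewrite mulKVmx // (unitmx_vnorm_lbound c_gt0).
have z_gt0 : 0 < vnorm z.
  rewrite lt0r vnorm_ge0 vnorm_eq0 andbT.
  by apply: contraNneq Qj_neq0 => z0; rewrite -Bz z0 mulmx0.
have lb_j : c * vnorm z <= vnorm (Q j) by rewrite -Bz B_lb.
rewrite -(ler_pM2r z_gt0); apply: le_trans (dot_le_vnorm w z).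
rewrite dot_w (bigD1 j) //= Bz -sqr_vnorm mulrBl; apply: lerD.
  rewrite -!mulrA expr2; apply: ler_wpM2l => //; rewrite mulrCA.
  by apply: ler_wpM2l; rewrite ?vnorm_ge0.
rewrite (mulrC K) -mulrA mulr_suml -sumrN; apply: ler_sum => i _.
rewrite -mulrA -mulrN; apply: ler_wpM2l => //; apply: le_trans (dot_ge_Nvnorm _ _).
by rewrite lerN2 ler_wpM2l ?vnorm_ge0.
Qed.

End AdjointSum.

Section MonomialDominance.
Variables (R : realType) (c1 K : R).

Definition dominance N (m : 'I_N -> R) (j : 'I_N) (v : R) : R :=
  c1 * (v ^+ j * m j) - K * \sum_(i | i != j) v ^+ i * m i.

Definition monomial_dominance N (dl ep : R) : Prop :=
  [/\ 0 < dl, dl <= 1, 0 < ep &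
    forall m : 'I_N -> R, (forall i, 0 <= m i) ->
    exists (j : 'I_N) (a : R), [/\ 0 <= a, a + dl <= 1 &
      forall v : R, a <= v <= a + dl -> ep * \sum_i m i <= dominance m j v]].

Lemma dominance_ord0 N (m : 'I_N.+2 -> R) v :
  dominance m ord0 v = c1 * m ord0 - K * (v * \sum_(i < N.+1) v ^+ i * m (lift ord0 i)).
Proof.
rewrite /dominance expr0 mul1r big_mkcond big_ord_recl /= add0r [v * _]mulr_sumr.
by congr (_ - K * _); apply: eq_bigr => i _; rewrite /bump leq0n add1n exprS mulrA.
Qed.

Lemma dominance_lift N (m : 'I_N.+2 -> R) j v :
  dominance m (lift ord0 j) v =
  v * dominance (fun i => m (lift ord0 i)) j v - K * m ord0.
Proof.
have tail : \sum_(i < N.+1 | i != j) v ^+ lift ord0 i * m (lift ord0 i) =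
    v * \sum_(i | i != j) v ^+ i * m (lift ord0 i).
  by rewrite mulr_sumr; apply: eq_bigr => i _; rewrite lift0 exprS mulrA.
rewrite /dominance big_mkcond big_ord_recl /=.
under eq_bigr do rewrite (inj_eq (@lift_inj _ ord0)).
by rewrite -big_mkcond tail /bump leq0n add1n exprS expr0 mul1r; ring.
Qed.

Hypotheses (c1_gt0 : 0 < c1) (K_gt0 : 0 < K).

Lemma dominance_ord0_ge N (m : 'I_N.+2 -> R) g v :
  (forall i, 0 <= m i) -> 0 < g -> g * \sum_(i < N.+1) m (lift ord0 i) <= m ord0 ->
  0 <= v <= 1 -> 2 * K * v <= c1 * g ->
  c1 / 2 * (g / (1 + g)) * \sum_i m i <= dominance m ord0 v.
Proof.
move=> m_ge0 g_gt0; set S := \sum_i _ => gS_le /andP[v_ge0 v_le1] Kv_le.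
rewrite big_ord_recl -/S dominance_ord0.
set X := \sum_i _.
have S_ge0 : 0 <= S by rewrite sumr_ge0.
have X_le : X <= S by apply: ler_sum => i _; rewrite ler_piMl ?exprn_ile1.
have KvX_le : K * v * X <= K * v * S by rewrite ler_wpM2l ?mulr_ge0 // ltW.
have KvS_le : 2 * K * v * S <= c1 * g * S by rewrite ler_wpM2r.
have c1gS_le : c1 * (g * S) <= c1 * m ord0 by rewrite ler_wpM2l // ltW.
have share_le : g / (1 + g) * (m ord0 + S) <= m ord0.
  by rewrite mulrAC ler_pdivrMr ?addr_gt0 //; nra.
have c1share_le : c1 / 2 * (g / (1 + g) * (m ord0 + S)) <= c1 / 2 * m ord0.
  by rewrite ler_wpM2l ?divr_ge0 // ltW.
lra.
Qed.

Lemma dominance_lift_ge N (m : 'I_N.+2 -> R) j g v ep :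
  (forall i, 0 <= m i) -> 0 < g -> m ord0 <= g * \sum_(i < N.+1) m (lift ord0 i) ->
  0 <= v -> 2 * K * g <= v * ep ->
  ep * \sum_(i < N.+1) m (lift ord0 i) <= dominance (fun i => m (lift ord0 i)) j v ->
  K * (g / (1 + g)) * \sum_i m i <= dominance m (lift ord0 j) v.
Proof.
move=> m_ge0 g_gt0; set S := \sum_i _ => m0_le v_ge0 Kg_le dom_ge.
rewrite big_ord_recl -/S dominance_lift.
have S_ge0 : 0 <= S by rewrite sumr_ge0.
have vdom_ge : v * (ep * S) <= v * dominance (fun i => m (lift ord0 i)) j v.
  exact: ler_wpM2l.
have KgS_le : 2 * K * g * S <= v * ep * S by rewrite ler_wpM2r.
have Km0_le : K * m ord0 <= K * (g * S) by rewrite ler_wpM2l // ltW.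
have share_le : g / (1 + g) * (m ord0 + S) <= g * S.
  rewrite mulrAC ler_pdivrMr ?addr_gt0 //.
  have : g * m ord0 <= g * (g * S) by rewrite ler_wpM2l // ltW.
  nra.
have Kshare_le : K * (g / (1 + g) * (m ord0 + S)) <= K * (g * S).
  by rewrite ler_wpM2l // ltW.
lra.
Qed.

Lemma monomial_dominance_succ N dl ep :
  monomial_dominance N.+1 dl ep -> exists dl' ep', monomial_dominance N.+2 dl' ep'.
Proof.
case=> dl_gt0 dl_le1 ep_gt0 dom.
(* If the constant term carries at least the fraction [g] of the tail [S], it wins for
   [v <= c1 g / (2 K)]; otherwise the tail wins by induction with [v >= dl/2], and
   [v ep S >= 2 K g S] absorbs the loss [K m_0 <= K g S]. *)
pose g := dl * ep / (4 * K).
have g_gt0 : 0 < g by rewrite divr_gt0 ?mulr_gt0.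
have Kg : 2 * K * g = dl / 2 * ep by rewrite /g; field; exact: lt0r_neq0.
clearbody g.
pose dl' := Num.min (c1 * g / (2 * K)) (dl / 2).
pose ep' := Num.min (c1 / 2) K * (g / (1 + g)).
have dl'_gt0 : 0 < dl' by rewrite /dl' lt_min !divr_gt0 ?mulr_gt0 ?ltr0n.
have dl'_le : dl' <= dl / 2 by rewrite /dl' ge_min lexx orbT.
have Kdl' : 2 * K * dl' <= c1 * g.
  by rewrite mulrC -ler_pdivlMr ?mulr_gt0 // /dl' ge_min lexx.
have ep'_gt0 : 0 < ep' by rewrite /ep' mulr_gt0 ?divr_gt0 ?addr_gt0 // lt_min divr_gt0 ?ltr0n.
exists dl', ep'; split => //; first lra.
move=> m m_ge0; have Sm_ge0 : 0 <= \sum_i m i by rewrite sumr_ge0.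
have [head|tail] := leP (g * \sum_(i < N.+1) m (lift ord0 i)) (m ord0).
  exists ord0, 0; split => //; first lra.
  move=> v; rewrite add0r => /andP[v_ge0 v_le].
  apply: le_trans (dominance_ord0_ge m_ge0 g_gt0 head _ _); last 2 first.
  - by rewrite v_ge0 /=; lra.
  - by apply: le_trans Kdl'; apply: ler_wpM2l => //; rewrite mulr_ge0 ?ler0n ?ltW.
  apply: ler_wpM2r => //; apply: ler_wpM2r; first by rewrite divr_ge0 ?addr_ge0 ?ltW.
  by rewrite ge_min lexx.
have [j [a [a_ge0 a_le dom_j]]] := dom _ (fun i => m_ge0 (lift ord0 i)).
exists (lift ord0 j), (a + dl / 2); split; [lra | lra |].
move=> v /andP[v_ge v_le].
have v_ge0 : 0 <= v by lra.
apply: le_trans (dominance_lift_ge m_ge0 g_gt0 (ltW tail) v_ge0 _ (dom_j v _)).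
- apply: ler_wpM2r => //; apply: ler_wpM2r; first by rewrite divr_ge0 ?addr_ge0 ?ltW.
  by rewrite ge_min lexx orbT.
- by rewrite Kg; apply: ler_wpM2r; [exact: ltW | lra].
- apply/andP; split; lra.
Qed.

Lemma exists_monomial_dominance N : exists dl ep, monomial_dominance N.+1 dl ep.
Proof.
elim: N => [|N [dl [ep]]]; last exact: monomial_dominance_succ.
exists 1, c1; split => // m _; exists ord0, 0; split => // v _.
rewrite /dominance big_ord1 big1 => [|i]; last by rewrite ord1 eqxx.
by rewrite expr0 mul1r mulr0 subr0.
Qed.

End MonomialDominance.

Section IntegralLowerBound.
Local Open Scope ereal_scope.

Lemma ge0_le_integral_nomeas d (T : measurableType d) (R : realType)
    (mu : {measure set T -> \bar R}) (D : set T) (f g : T -> \bar R) :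
  (forall x, D x -> 0 <= g x) -> (forall x, D x -> g x <= f x) ->
  \int[mu]_(x in D) g x <= \int[mu]_(x in D) f x.
Proof.
move=> g_ge0 le_gf.
have f_ge0 x : D x -> 0 <= f x by move=> Dx; exact: le_trans (g_ge0 x Dx) (le_gf x Dx).
rewrite (ge0_integralE mu g_ge0) (ge0_integralE mu f_ge0).
apply: ge_ereal_sup => _ [h le_hg <-]; apply: ereal_sup_ubound; exists h => // x.
apply: le_trans (le_hg x) _; rewrite !patchE; case: ifPn => // /set_mem Dx.
exact: le_gf.
Qed.

Local Close Scope ereal_scope.
Variable R : realType.
Local Notation mu := (@lebesgue_measure R).

Lemma lebesgue_measure_itv_cc (a b : R) : a < b -> mu [set` `[a, b]] = (b - a)%:E.
Proof. by move=> ab; rewrite lebesgue_measure_itv /= lte_fin ab -EFinD. Qed.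

Lemma Rintegral_ge_subitv (f : R -> R) (lo hi a dl k M : R) :
  lo <= a -> 0 < dl -> a + dl <= hi -> 0 <= k ->
  (forall x, lo <= x <= hi -> 0 <= f x <= M) ->
  (forall x, a <= x <= a + dl -> k <= f x) ->
  k * dl <= \int[mu]_(x in `[lo, hi]) f x.
Proof.
move=> lo_a dl_gt0 adl_hi k_ge0 f_bnd f_ge.
have lo_hi : lo < hi by lra.
set J := [set` `[a, a + dl]].
have mJ : measurable J by exact: measurable_itv.
set I := (\int[mu]_(x in `[lo, hi]) (f x)%:E)%E.
have I_ge : ((k * dl)%:E <= I)%E.
  have <- : (\int[mu]_(x in `[lo, hi]) (k * \1_J x)%:E = (k * dl)%:E)%E.
    have -> : (\int[mu]_(x in `[lo, hi]) (k * \1_J x)%:E =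
        k%:E * \int[mu]_(x in `[lo, hi]) (\1_J x)%:E)%E.
      apply: (@integralZl_indic _ _ _ mu _ _ (fun _ => J)) => //.
      by move=> /lt_le_trans/(_ k_ge0); rewrite ltxx.
    have J_sub : J `<=` [set` `[lo, hi]].
      move=> x; rewrite /J /= !in_itv /= => /andP[ax xa].
      by apply/andP; split; [exact: le_trans lo_a ax | exact: le_trans xa adl_hi].
    rewrite integral_indic // (setIidl J_sub) /J.
    by rewrite [X in (_ * X)%E]lebesgue_measure_itv_cc ?ltrDl // addrAC subrr add0r -EFinM.
  apply: ge0_le_integral_nomeas => [x _|x].
    by rewrite lee_fin mulr_ge0 // indicE; case: (x \in J).
  rewrite /= in_itv /= => lohi_x; rewrite lee_fin indicE.
  have [/set_mem|_] := boolP (x \in J); last by rewrite mulr0; case/andP: (f_bnd x lohi_x).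
  by rewrite mulr1 /J /= in_itv /=; exact: f_ge.
have I_le : (I <= (M * (hi - lo))%:E)%E.
  have -> : (M * (hi - lo))%:E = (\int[mu]_(x in `[lo, hi]) M%:E)%E.
    by rewrite integral_cst // [X in (_ * X)%E]lebesgue_measure_itv_cc // -EFinM.
  apply: ge0_le_integral_nomeas => x; rewrite /= in_itv /= => /f_bnd/andP[f_ge0 f_leM].
    by rewrite lee_fin.
  by rewrite lee_fin.
have I_fin : I = (fine I)%:E.
  rewrite fineK // ge0_fin_numE ?(le_lt_trans I_le) ?ltey //.
  by apply: le_trans I_ge; rewrite lee_fin mulr_ge0 // ltW.
by rewrite /Rintegral -/I -lee_fin -I_fin.
Qed.

End IntegralLowerBound.

Lemma dominance_le_factorial_weights (R : realType) (c K v : R) N (m : 'I_N.+1 -> R) j :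
  0 <= c -> 0 <= K -> 0 <= v -> (forall i, 0 <= m i) ->
  dominance (c / N`!%:R) K m j v <=
  v ^+ j / j`!%:R * c * m j - K * \sum_(i | i != j) v ^+ i / i`!%:R * m i.
Proof.
move=> c_ge0 K_ge0 v_ge0 m_ge0; apply: lerB.
  apply: (@le_trans _ _ (c * v ^+ j * m j * N`!%:R^-1)); first lra.
  apply: (@le_trans _ _ (c * v ^+ j * m j * j`!%:R^-1)); last lra.
  apply: ler_wpM2l; first by rewrite !mulr_ge0 ?exprn_ge0.
  rewrite lef_pV2 ?posrE ?ltr0n ?fact_gt0 // ler_nat leq_fact //.
  by rewrite -ltnS ltn_ord.
apply: ler_wpM2l => //; apply: ler_sum => i _; apply: ler_wpM2r => //.
by rewrite ler_pdivrMr ?ltr0n ?fact_gt0 // ler_peMr ?exprn_ge0 // ler1n fact_gt0.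
Qed.

Section ScaledResolvent.
Variables (R : realType) (n d : nat) (Res : R -> R -> 'M[R]_(n.+1 * d)) (T0 c K : R)
  (Rb : 'I_n.+1 -> R -> R -> 'M[R]_d).
Hypotheses (c_gt0 : 0 < c) (K_gt0 : 0 < K).
Hypothesis Res_blocks : forall t s : R, 0 <= t -> t <= s -> s <= t + T0 -> forall i,
  cblk (firstcols (Res s t)) i = ((s - t) ^+ i / (i`!)%:R) *: Rb i s t.
Hypothesis Rb_bounds : forall t s : R, 0 <= t -> t <= s -> s <= t + T0 -> forall i xi,
  c * vnorm xi <= vnorm (Rb i s t *m xi) /\ vnorm (Rb i s t *m xi) <= K * vnorm xi.
Variables (t s : R) (p : 'cV[R]_(n.+1 * d)).
Hypotheses (t_ge0 : 0 <= t) (lt_ts : t < s) (le_sT : s <= t + T0).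

Let q := Mmat n d (s - t) *m p.
Let u (v : R) := s - v * (s - t).

Let u_range (v : R) : 0 <= v <= 1 -> [/\ 0 <= u v, u v <= s & s <= u v + T0].
Proof.
case/andP=> v_ge0 v_le1.
have st_ge0 : 0 <= s - t by rewrite subr_ge0 ltW.
have := ler_piMl st_ge0 v_le1; have := mulr_ge0 v_ge0 st_ge0.
by move: t_ge0 le_sT; rewrite /u => *; split; lra.
Qed.

Lemma dot_Rbarv (v : R) (z : 'cV[R]_d) : 0 <= v <= 1 ->
  dot ((Rbarv Res t s v)^T *m q) z =
  \sum_(i < n.+1) v ^+ i / i`!%:R * dot (vblk q i) (Rb i s (u v) *m z).
Proof.
move=> /u_range[u_ge0 u_le_s s_le_u].
rewrite trmx_Rbarv_Mmat ?gt_eqF // dot_trmx_vblk; apply: eq_bigr => i _.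
rewrite Res_blocks // -scalemxAl (@dotZr R d) /q vblk_Mmat (@dotZl R d).
by rewrite /u opprB addrC subrK exprMn; ring.
Qed.

Let Rb_bounds_at (v : R) : 0 <= v <= 1 -> forall i z,
  c * vnorm z <= vnorm (Rb i s (u v) *m z) /\ vnorm (Rb i s (u v) *m z) <= K * vnorm z.
Proof. by case/u_range => *; exact: Rb_bounds. Qed.

Lemma vnorm_Rbarv_le (v : R) : 0 <= v <= 1 ->
  vnorm ((Rbarv Res t s v)^T *m q) <= K * \sum_i vnorm (vblk q i).
Proof.
move=> v01; have /andP[v_ge0 v_le1] := v01.
have w_ge0 (i : 'I_n.+1) : 0 <= v ^+ i / i`!%:R by rewrite divr_ge0 ?exprn_ge0.
apply: le_trans (vnorm_adjoint_sum_le w_ge0 (ltW K_gt0)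
  (fun i z => (Rb_bounds_at v01 i z).2) (fun z => dot_Rbarv z v01)) _.
apply: ler_wpM2l; first exact: ltW.
apply: ler_sum => i _; apply: ler_piMl; first exact: vnorm_ge0.
rewrite ler_pdivrMr ?ltr0n ?fact_gt0 // mul1r (le_trans (exprn_ile1 _ _ _)) //.
by rewrite ler1n fact_gt0.
Qed.

Lemma dominance_le_vnorm_Rbarv (v : R) (j : 'I_n.+1) : 0 <= v <= 1 ->
  dominance (c / n`!%:R) K (fun i => vnorm (vblk q i)) j v <=
  vnorm ((Rbarv Res t s v)^T *m q).
Proof.
move=> v01; have /andP[v_ge0 _] := v01.
have w_ge0 (i : 'I_n.+1) : 0 <= v ^+ i / i`!%:R by rewrite divr_ge0 ?exprn_ge0.
apply: le_trans (dominance_le_factorial_weights j (ltW c_gt0) (ltW K_gt0) v_ge0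
  (fun i => vnorm_ge0 (vblk q i))) _.
exact: (vnorm_adjoint_sum_ge w_ge0 (ltW K_gt0)
  (fun i z => (Rb_bounds_at v01 i z).2) (fun z => dot_Rbarv z v01) c_gt0
  (fun i z => (Rb_bounds_at v01 i z).1)).
Qed.

End ScaledResolvent.

Theorem lemma5p3 (R : realType) (n d : nat) (alpha alo ahi T0 : R)
  (A : R -> 'M[R]_(n.+1 * d)) (Res : R -> R -> 'M[R]_(n.+1 * d)) :
  (0 < d)%N ->
  0 < alpha -> alpha < 2 ->
  (* [H-3] *)
  0 < alo ->
  (forall k l, measurable_fun [set: R] (fun r => A r k l)) ->
  (forall r (i j : 'I_n.+1), (j.+1 < i)%N -> blk (A r) i j = 0) ->
  (forall r (i : 'I_n) (xi : 'cV[R]_d),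
     alo * vnorm xi ^+ 2 <= (xi^T *m blk (A r) (lift ord0 i) (widen_ord (leqnSn n) i) *m xi) 0 0
     /\ (xi^T *m blk (A r) (lift ord0 i) (widen_ord (leqnSn n) i) *m xi) 0 0 <= ahi * vnorm xi ^+ 2) ->
  (forall r (i j : 'I_n.+1) (xi : 'cV[R]_d), vnorm (blk (A r) i j *m xi) <= ahi * vnorm xi) ->
  (* resolvent: d/ds R_{s,t} = A_s R_{s,t}, R_{t,t} = I (integral form) *)
  (forall t k l, {within `[t, +oo[, continuous (fun s => Res s t k l)}) ->
  (forall t s, t <= s -> forall k l,
     Res s t k l = (k == l)%:R
       + \int[lebesgue_measure]_(r in `[t, s]) ((A r *m Res r t) k l)) ->
  (* resolvent structure lemma, with T0 and \bar R^i *)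
  0 < T0 -> T0 <= 1 ->
  (exists (Rb : 'I_n.+1 -> R -> R -> 'M[R]_d) (c K : R),
     0 < c /\ 0 < K /\
     (forall t s, 0 <= t -> t <= s -> s <= t + T0 -> forall i : 'I_n.+1,
        cblk (firstcols (Res s t)) i = ((s - t) ^+ i / (i`!)%:R) *: Rb i s t) /\
     (forall (i : 'I_n.+1) a b,
        {within [set st : R * R | 0 <= st.2 /\ st.2 <= st.1 /\ st.1 <= st.2 + T0],
          continuous (fun st : R * R => Rb i st.1 st.2 a b)}) /\
     (forall t s, 0 <= t -> t <= s -> s <= t + T0 -> forall (i : 'I_n.+1) (xi : 'cV[R]_d),
        c * vnorm xi <= vnorm (Rb i s t *m xi) /\ vnorm (Rb i s t *m xi) <= K * vnorm xi)) ->
  exists C : R, 0 < C /\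
    forall t s, 0 <= t -> t < s -> s <= t + T0 -> forall p : 'cV[R]_(n.+1 * d),
      \int[lebesgue_measure]_(v in `[0, 1])
          (vnorm ((Rbarv Res t s v)^T *m (Mmat n d (s - t) *m p))) `^ alpha
      >= C * (vnorm (Mmat n d (s - t) *m p)) `^ alpha.
Proof.
move=> _ alpha_gt0 _ _ _ _ _ _ _ _ _ _ [Rb [c [K [c_gt0 [K_gt0 [Res_blocks [_ Rb_bounds]]]]]]].
have c1_gt0 : 0 < c / n`!%:R by rewrite divr_gt0 ?ltr0n ?fact_gt0.
have [dl [ep [dl_gt0 _ ep_gt0 dom]]] := exists_monomial_dominance c1_gt0 K_gt0 n.
exists (dl * ep `^ alpha); split; first by rewrite mulr_gt0 ?powR_gt0.
move=> t s t_ge0 lt_ts le_sT p; set q := Mmat n d (s - t) *m p.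
have [j [a [a_ge0 adl_le dom_j]]] := dom _ (fun i => vnorm_ge0 (vblk q i)).
have powR_le x y : 0 <= x -> x <= y -> x `^ alpha <= y `^ alpha.
  by move=> x_ge0 le_xy; rewrite ge0_ler_powR ?nnegrE ?(ltW alpha_gt0) ?(le_trans x_ge0).
rewrite -mulrA -powRM ?vnorm_ge0 ?(ltW ep_gt0) // mulrC.
apply: (Rintegral_ge_subitv (M := (K * \sum_i vnorm (vblk q i)) `^ alpha) a_ge0 dl_gt0 adl_le).
- exact: powR_ge0.
- move=> v v01; rewrite powR_ge0 powR_le ?vnorm_ge0 //.
  exact: (vnorm_Rbarv_le K_gt0 Res_blocks Rb_bounds p t_ge0 lt_ts le_sT).
- move=> v /andP[a_le_v v_le]; apply: powR_le; first by rewrite mulr_ge0 ?vnorm_ge0 ?ltW.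
  have v01 : 0 <= v <= 1 by apply/andP; split; lra.
  apply: le_trans (dominance_le_vnorm_Rbarv c_gt0 K_gt0 Res_blocks Rb_bounds p
    t_ge0 lt_ts le_sT j v01).
  apply: le_trans (dom_j v _); last by rewrite a_le_v.
  by rewrite ler_wpM2l ?(ltW ep_gt0) ?vnorm_le_sum_vblk.
Qed.
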